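(* Let $\Lambda$ be a countable index set, $\mathbb{Y}$ a Banach space, and $(\overline{a}_j)_{j\in\Lambda}$, $(\overline{r}_j)_{j\in\Lambda}$ sequences of positive reals with $\overline{a}_j\overline{r}_j^{-1}\to 0$. Write $\|x\|_{\omega,p}=(\sum_j\omega_j^p|x_j|^p)^{1/p}$, $\ell^p_\omega=\{x:\|x\|_{\omega,p}<\infty\}$. Suppose $D\subseteq\ell^2_{\overline{a}}$ is closed, $D\cap\ell^1_{\overline{r}}\neq\emptyset$, and $F\colon D\to\mathbb{Y}$ satisfies for some $L>0$: $\tfrac1L\|x^{(1)}-x^{(2)}\|_{\overline{a},2}\le\|F(x^{(1)})-F(x^{(2)})\|_{\mathbb{Y}}\le L\|x^{(1)}-x^{(2)}\|_{\overline{a},2}$ for all $x^{(1)},x^{(2)}\in D$. Let $\|x\|_{k_t}=\sup_{\alpha>0}\alpha\big(\sum_j\overline{a}_j^{-2}\overline{r}_j^2\mathbb{1}_{\{\overline{a}_j^{-2}\overline{r}_j\alpha<|x_j|\}}\big)^{1/t}$. Let $t\in(0,1)$, $\varrho>0$, $x^+\in D$ with $\|x^+\|_{k_t}\le\varrho$, $\delta\ge0$ and $g^{\mathrm{obs}}\in\mathbb{Y}$ with $\|g^{\mathrm{obs}}-F(x^+)\|_{\mathbb{Y}}\le\delta$. Let $\hat x_\alpha$ denote any minimizer of $\tfrac12\|g^{\mathrm{obs}}-F(x)\|_{\mathbb{Y}}^2+\alpha\sum_j\overline{r}_j|x_j|$ over $x\in D$. 1. (error splitting) For all $\alpha>0$: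 $\|x^+-\hat x_\alpha\|_{\overline{r},1}\le C_e(\delta^2\alpha^{-1}+\varrho^t\alpha^{1-t})$ and $\|x^+-\hat x_\alpha\|_{\overline{a},2}\le C_e(\delta+\varrho^{t/2}\alpha^{\frac{2-t}{2}})$, with $C_e$ depending only on $t$ and $L$. 2. (a-priori choice) If $\delta>0$ and $c_1\varrho^{\frac{t}{t-2}}\delta^{\frac{2}{2-t}}\le\alpha\le c_2\varrho^{\frac{t}{t-2}}\delta^{\frac{2}{2-t}}$ with $0<c_1<c_2$, then $\|x^+-\hat x_\alpha\|_{\overline{r},1}\le C_p\varrho^{\frac{t}{2-t}}\delta^{\frac{2-2t}{2-t}}$ and $\|x^+-\hat x_\alpha\|_{\overline{a},2}\le C_p\delta$, with $C_p$ depending only on $c_1,c_2,t,L$. 3. (discrepancy principle) Let $1\le\tau_1\le\tau_2$. If $\hat x_\alpha$ is a minimizer with $\tau_1\delta\le\|F(\hat x_\alpha)-g^{\mathrm{obs}}\|_{\mathbb{Y}}\le\tau_2\delta$, then $\|x^+-\hat x_\alpha\|_{\overline{r},1}\le C_d\varrho^{\frac{t}{2-t}}\delta^{\frac{2-2t}{2-t}}$ and $\|x^+-\hat x_\alpha\|_{\overline{a},2}\le C_d\delta$, with $C_d$ depending only on $\tau_2,t,L$.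
   Context: Convergence rates for weighted $\ell^1$ Tikhonov regularization (non-oversmoothing case, $t\in(0,1)$) on bounded sets of the weak sequence space $k_t$. *)

From HB Require Import structures.
From mathcomp Require Import all_boot all_order all_algebra.
From mathcomp Require Import all_classical all_reals all_analysis.
Set Implicit Arguments. Unset Strict Implicit. Unset Printing Implicit Defensive.
Import Order.TTheory GRing.Theory Num.Theory.
Import numFieldNormedType.Exports.
Local Open Scope classical_set_scope.
Local Open Scope ring_scope.

(* weighted p-norm  ||x||_{w,p} = (sum_j w_j^p |x_j|^p)^(1/p), valued in \bar R
   (it is +oo exactly when x is not in l^p_w). *)
Definition wnorm {R : realType} {Lam : countType} (w : Lam -> R) (p : R)
    (x : Lam -> R) : \bar R :=
  poweR (\esum_(j in [set: Lam]) ((w j `^ p) * (`|x j| `^ p))%:E) p^-1.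

Definition ktnorm {R : realType} {Lam : countType} (a r : Lam -> R) (t : R)
    (x : Lam -> R) : \bar R :=
  ereal_sup [set (alpha%:E * poweR (\esum_(j in [set: Lam])
                   ((a j)^-2 * (r j) ^+ 2
                    * (if (a j)^-2 * r j * alpha < `|x j| then 1 else 0))%:E) t^-1)%E
            | alpha in [set alpha : R | 0 < alpha]].

Definition closed_in_l2 {R : realType} {Lam : countType} (a : Lam -> R)
    (D : set (Lam -> R)) : Prop :=
  forall (u : nat -> Lam -> R) (x : Lam -> R),
    (forall n, D (u n)) -> (wnorm a 2 x < +oo)%E ->
    (wnorm a 2 (fun j => u n j - x j)) @[n --> \oo] --> 0%E ->
    D x.

Definition tikhonov {R : realType} {Lam : countType} {Y : normedModType R}
    (F : (Lam -> R) -> Y) (r : Lam -> R) (g : Y) (alpha : R) (x : Lam -> R)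
    : \bar R :=
  ((2^-1 * `|g - F x| ^+ 2)%:E + alpha%:E * wnorm r 1 x)%E.

Definition is_minimizer {R : realType} {Lam : countType} {Y : normedModType R}
    (F : (Lam -> R) -> Y) (D : set (Lam -> R)) (r : Lam -> R) (g : Y)
    (alpha : R) (xh : Lam -> R) : Prop :=
  D xh /\ forall x, D x -> (tikhonov F r g alpha xh <= tikhonov F r g alpha x)%E.

Definition setting {R : realType} {Lam : countType} {Y : completeNormedModType R}
    (a r : Lam -> R) (D : set (Lam -> R)) (F : (Lam -> R) -> Y) (L : R) : Prop :=
  [/\ (forall j, 0 < a j) /\ (forall j, 0 < r j),
      cvg_to (fmap (fun j => a j / r j) (@frechet_filter Lam)) (nbhs (0 : R)),
      (forall x, D x -> (wnorm a 2 x < +oo)%E) /\ closed_in_l2 a D,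
      (exists x, D x /\ (wnorm r 1 x < +oo)%E) &
      0 < L /\ forall x1 x2, D x1 -> D x2 ->
        ((L^-1)%:E * wnorm a 2 (fun j => (x1 j - x2 j)%R) <= (`|F x1 - F x2|%R)%:E)%E /\
        ((`|F x1 - F x2|%R)%:E <= L%:E * wnorm a 2 (fun j => (x1 j - x2 j)%R))%E].

From HB Require Import structures.
From mathcomp Require Import all_boot all_order all_algebra.
From mathcomp Require Import all_classical all_reals all_analysis.
From mathcomp Require Import ring lra.
Import Order.TTheory GRing.Theory Num.Theory.
Import numFieldNormedType.Exports.
Local Open Scope classical_set_scope.
Local Open Scope ring_scope.

(* Minimality of [xh], tested against [xp], gives
     ||xh||_{r,1} - ||xp||_{r,1} <= (delta^2 - ||g - F xh||^2) / (2 alpha),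
   and the lower Lipschitz bound gives ||xp - xh||_{a,2} <= L (delta + ||g - F xh||).
   Split the coordinates of [xp] at the level |xp_j| > a_j^-2 r_j beta.  On the large
   ones the triangle inequality is lost, but AM-GM trades it for [c] times their
   weighted count, which is at most (rho/beta)^t by definition of k_t, plus
   ||xp - xh||_{a,2}^2 / c; the small ones, grouped in dyadic level bands, contribute
   O(beta (rho/beta)^t).  This bounds ||xp - xh||_{r,1} for all beta, c > 0.  Taking
   beta = alpha and optimising c gives the error splitting, from which the a-priori
   rate follows for alpha ~ rho^(t/(t-2)) delta^(2/(2-t)).  Under the discrepancy
   principle the fidelity term is nonpositive, and beta = c = rho^(t/(t-2))
   delta^(2/(2-t)) gives the rate directly. *)

Section NonnegEsum.
Context {R : realType} {T : choiceType}.
Implicit Types (h : T -> R) (s : seq T).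

Lemma esum_le_sums h (B : \bar R) :
  (forall s, uniq s -> ((\sum_(i <- s) h i)%:E <= B)%E) ->
  (\esum_(i in [set: T]) (h i)%:E <= B)%E.
Proof.
move=> hB; apply: ge_ereal_sup => _ [X [finX _] <-].
by rewrite fsbig_finite // sumEFin; apply: hB.
Qed.

Lemma sum_le_esum h s : (forall i, 0 <= h i) -> uniq s ->
  ((\sum_(i <- s) h i)%:E <= \esum_(i in [set: T]) (h i)%:E)%E.
Proof.
move=> h0 us; apply: esum_ge; exists [set` s]; first by split=> //; exact: finite_seq.
by rewrite -sumEFin (fsbig_seq _ _ us).
Qed.

End NonnegEsum.

Section GeometricSums.
Context {R : realType}.

Lemma geometric_sum_le (th : R) (N : nat) : 0 <= th < 1 ->
  \sum_(0 <= k < N) th ^+ k <= (1 - th)^-1.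
Proof.
move=> /andP[th0 th1].
have := congr1 (fun u => u N) (geometric_seriesE 1 (negbT (lt_eqF th1))).
rewrite /series /=.
under eq_bigr do rewrite mul1r.
move=> ->; rewrite mul1r ler_pdivrMr ?subr_gt0 // mulVf ?subr_eq0 ?gt_eqF //.
by rewrite gerBl exprn_ge0.
Qed.

Lemma le_dyadic_sum {m v : R} {N : nat} : 0 < m -> v <= m -> m < v * 2 ^+ N ->
  v <= \sum_(0 <= k < N) m / 2 ^+ k * (if m / 2 ^+ k.+1 < v then 1 else 0).
Proof.
move=> m0 vm; elim: N => [|N IH] mvN.
  by move: mvN; rewrite expr0 mulr1 => /(le_lt_trans vm); rewrite ltxx.
have term_ge0 k : 0 <= m / 2 ^+ k * (if m / 2 ^+ k.+1 < v then 1 else 0).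
  by rewrite mulr_ge0 ?divr_ge0 ?exprn_ge0 ?(ltW m0) //; case: ifP.
rewrite big_nat_recr //=.
have [vN_le|vN_gt] := leP (v * 2 ^+ N) m; last first.
  by apply: le_trans (IH vN_gt) _; rewrite lerDl.
have -> : m / 2 ^+ N.+1 < v by rewrite ltr_pdivrMr ?exprn_gt0.
rewrite mulr1; apply: (@le_trans _ _ (0 + m / 2 ^+ N)).
  by rewrite add0r ler_pdivlMr ?exprn_gt0.
by rewrite lerD2r sumr_ge0.
Qed.

Lemma exists_pow2_gt {T : eqType} (s : seq T) {m : T -> R} (v : T -> R) :
  (forall j, 0 <= m j) ->
  exists N : nat, forall j, j \in s -> 0 < v j -> m j < v j * 2 ^+ N.
Proof.
move=> m0; elim: s => [|j s [N1 IH]]; first by exists 0%N.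
have [vj_gt0|vj_le0] := ltP 0 (v j); last first.
  exists N1 => i; rewrite inE => /predU1P[->|/IH //].
  by move=> /(le_lt_trans vj_le0); rewrite ltxx.
pose n := Num.Def.archi_bound (m j / v j).
have mj_lt : m j < v j * 2 ^+ n.
  have := archi_boundP (divr_ge0 (m0 j) (ltW vj_gt0)).
  rewrite ltr_pdivrMr // mulrC => /lt_le_trans; apply.
  by rewrite ler_pM2l // -natrX ler_nat ltnW // ltn_expl.
have le_pow2 k : (k <= maxn N1 n)%N ->
    forall i, 0 < v i -> v i * 2 ^+ k <= v i * 2 ^+ maxn N1 n.
  by move=> kN i vi0; rewrite ler_pM2l // ler_eXn2l // ltr1n.
exists (maxn N1 n) => i; rewrite inE => /predU1P[-> _|/IH mi_lt vi_gt0].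
  exact: lt_le_trans mj_lt (le_pow2 _ (leq_maxr _ _) _ vj_gt0).
exact: lt_le_trans (mi_lt vi_gt0) (le_pow2 _ (leq_maxl _ _) _ vi_gt0).
Qed.

End GeometricSums.

Section WeightedNorms.
Context {R : realType} {Lam : countType}.
Implicit Types (a r x : Lam -> R) (s : seq Lam).

Lemma wnorm1E r x : (forall j, 0 <= r j) ->
  wnorm r 1 x = \esum_(j in [set: Lam]) (r j * `|x j|)%:E.
Proof.
move=> r0; rewrite /wnorm invr1 poweRe1; last first.
  by apply: esum_ge0 => j _; rewrite lee_fin mulr_ge0 ?powR_ge0.
by apply: eq_esum => j _; rewrite !powRr1.
Qed.

Lemma wnorm2_le_sums {a x} {M : R} : (forall j, 0 <= a j) -> (wnorm a 2 x <= M%:E)%E ->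
  0 <= M /\ forall s, uniq s -> \sum_(j <- s) a j ^+ 2 * x j ^+ 2 <= M ^+ 2.
Proof.
move=> a0; rewrite /wnorm.
set E := esum _ _.
have E0 : (0 <= E)%E by apply: esum_ge0 => j _; rewrite lee_fin mulr_ge0 ?powR_ge0.
have sum_le s : uniq s -> ((\sum_(j <- s) a j ^+ 2 * x j ^+ 2)%:E <= E)%E.
  move=> us; have := sum_le_esum _ _
    (fun j => mulr_ge0 (powR_ge0 (a j) 2) (powR_ge0 `|x j| 2)) us.
  congr (_ <= _)%E; congr (_%:E); apply: eq_bigr => j _.
  by rewrite -[2]/(2%:R) !powR_mulrn // real_normK // num_real.
case: E E0 sum_le => [e| |] // e0 sum_le; last by rewrite poweRyr // invr_eq0.
rewrite poweR_EFin lee_fin => eM.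
have M0 : 0 <= M := le_trans (powR_ge0 _ _) eM.
split=> // s us; have := sum_le s us; rewrite lee_fin => /le_trans; apply.
have -> : e = (e `^ 2^-1) ^+ 2.
  by rewrite -powR_mulrn ?powR_ge0 // -powRrM mulVf // powRr1.
by rewrite ler_pXn2r ?nnegrE ?powR_ge0.
Qed.

Lemma wnorm1_le0 a r x : (forall j, 0 < a j) -> (forall j, 0 <= r j) ->
  (wnorm a 2 x <= 0%:E)%E -> (wnorm r 1 x <= 0%:E)%E.
Proof.
move=> a0 r0 /(wnorm2_le_sums (fun j => ltW (a0 j))) [_ sum_le].
have x0 j : x j = 0.
  have := sum_le [:: j] isT; rewrite big_seq1 expr0n /= => sq_le0.
  have /eqP : a j ^+ 2 * x j ^+ 2 = 0 by apply/eqP; rewrite eq_le sq_le0 mulr_ge0 ?sqr_ge0.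
  by rewrite mulf_eq0 !expf_eq0 /= gt_eqF // => /eqP.
rewrite wnorm1E //; apply: esum_le_sums => s _.
by rewrite big1 // => j _; rewrite x0 normr0 mulr0.
Qed.

Lemma level_term_ge0 (aj rj : R) (b : bool) :
  0 <= aj^-2 * rj ^+ 2 * (if b then 1 else 0).
Proof. by apply: mulr_ge0; [rewrite mulr_ge0 ?invr_ge0 ?sqr_ge0 | case: b]. Qed.

Lemma ktnorm_ub_ge0 {a r x} {t rho : R} : (ktnorm a r t x <= rho%:E)%E -> 0 <= rho.
Proof.
move=> x_kt; rewrite -lee_fin; apply: le_trans x_kt.
apply: le_trans (ereal_sup_ubound _); last first.
  by exists 1; first exact: ltr01.
by rewrite mul1e poweR_ge0.
Qed.

Lemma ktnorm_level_sum_le {a r x} {t rho beta : R} : 0 < t -> 0 < beta ->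
  (ktnorm a r t x <= rho%:E)%E -> forall s, uniq s ->
  \sum_(j <- s) (a j)^-2 * r j ^+ 2 * (if (a j)^-2 * r j * beta < `|x j| then 1 else 0)
    <= (rho / beta) `^ t.
Proof.
move=> t0 b0 x_kt s us; have rho0 := ktnorm_ub_ge0 x_kt.
have level_le : (beta%:E * poweR (\esum_(j in [set: Lam])
    ((a j)^-2 * (r j) ^+ 2 * (if (a j)^-2 * r j * beta < `|x j| then 1 else 0))%:E) t^-1
    <= rho%:E)%E.
  by apply: le_trans x_kt; apply: ereal_sup_ubound; exists beta.
move: level_le (sum_le_esum _ _
  (fun j => level_term_ge0 (a j) (r j) ((a j)^-2 * r j * beta < `|x j|)) us).
set E := esum _ _.
have E0 : (0 <= E)%E by apply: esum_ge0 => j _; rewrite lee_fin level_term_ge0.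
case: E E0 => [e| |] // e0; last first.
  by rewrite poweRyr ?invr_eq0 ?gt_eqF // gt0_muley // leye_eq.
rewrite poweR_EFin -EFinM !lee_fin => level_le /le_trans; apply.
have -> : e = (e `^ t^-1) `^ t by rewrite -powRrM mulVf ?gt_eqF // powRr1.
apply: ge0_ler_powR; rewrite ?nnegrE ?powR_ge0 ?divr_ge0 ?(ltW t0) ?(ltW b0) //.
by rewrite ler_pdivlMr // mulrC.
Qed.

End WeightedNorms.

Section DyadicBound.
Context {R : realType} {Lam : countType}.
Implicit Types (a r x : Lam -> R) (s : seq Lam).

(* [= sum_k 2^-k 2^((k+1) t)]: the contributions of the dyadic level bands
   [beta 2^-(k+1)], each controlled by the k_t count at that level. *)
Definition dyadic_const (t : R) := 2 `^ t / (1 - 2 `^ t / 2).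

Lemma powR2_half_gt0_lt1 {t : R} : 0 < t < 1 -> 0 < 2 `^ t / 2 < 1.
Proof.
move=> /andP[t0 t1]; rewrite divr_gt0 ?powR_gt0 //= ltr_pdivrMr // mul1r.
rewrite /powR pnatr_eq0 /= -[X in _ < X](@lnK _ 2) ?posrE //.
by rewrite ltr_expR -[X in _ < X]mul1r ltr_pM2r // ln_gt0 // ltr1n.
Qed.

Lemma dyadic_const_gt0 {t : R} : 0 < t < 1 -> 0 < dyadic_const t.
Proof.
by move=> /powR2_half_gt0_lt1 /andP[_ lt1]; rewrite divr_gt0 ?powR_gt0 ?subr_gt0.
Qed.

Lemma small_coord_le_dyadic (aj rj v beta : R) (N : nat) :
  0 < rj -> 0 < aj^-2 * rj * beta ->
  v <= aj^-2 * rj * beta -> aj^-2 * rj * beta < v * 2 ^+ N ->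
  rj * v <= \sum_(0 <= k < N) beta / 2 ^+ k *
    (aj^-2 * rj ^+ 2 * (if aj^-2 * rj * (beta / 2 ^+ k.+1) < v then 1 else 0)).
Proof.
move=> rj0 m0 vm mvN; have := le_dyadic_sum m0 vm mvN.
move=> /(ler_wpM2l (ltW rj0)) /le_trans; apply.
rewrite mulr_sumr; apply: ler_sum => k _; rewrite !mulrA.
by case: ifP => _; rewrite le_eqVlt; apply/orP; left; apply/eqP; ring.
Qed.

Lemma ktnorm_small_sum_le {a r x} {t rho beta : R} :
  0 < t < 1 -> 0 < beta -> (forall j, 0 < a j) -> (forall j, 0 < r j) ->
  (ktnorm a r t x <= rho%:E)%E -> forall s, uniq s ->
  \sum_(j <- s) r j * `|x j| * (if (a j)^-2 * r j * beta < `|x j| then 0 else 1)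
    <= dyadic_const t * beta * (rho / beta) `^ t.
Proof.
move=> t01 b0 a0 r0 x_kt s us; have /andP[t0 _] := t01.
have rho0 := ktnorm_ub_ge0 x_kt.
have m0 j : 0 < (a j)^-2 * r j * beta by rewrite !mulr_gt0 ?invr_gt0 ?exprn_gt0.
have [N mN] := exists_pow2_gt s (fun j => `|x j|) (fun j => ltW (m0 j)).
pose G j k := beta / 2 ^+ k * ((a j)^-2 * r j ^+ 2 *
   (if (a j)^-2 * r j * (beta / 2 ^+ k.+1) < `|x j| then 1 else 0)).
have G0 j k : 0 <= G j k.
  by rewrite mulr_ge0 ?level_term_ge0 ?divr_ge0 ?exprn_ge0 ?(ltW b0).
have small_le j : j \in s ->
    r j * `|x j| * (if (a j)^-2 * r j * beta < `|x j| then 0 else 1)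
      <= \sum_(0 <= k < N) G j k.
  move=> js; case: ifP => [_|/negbT]; first by rewrite mulr0 sumr_ge0.
  rewrite -leNgt mulr1 => small; have [->|xj0] := eqVneq (x j) 0.
    by rewrite normr0 mulr0 sumr_ge0.
  by apply: small_coord_le_dyadic => //; apply: mN; rewrite ?normr_gt0.
set q := (rho / beta) `^ t; set P := 2 `^ t.
have /andP[P2_gt0 P2_lt1] := powR2_half_gt0_lt1 t01.
apply: (@le_trans _ _ (\sum_(0 <= k < N) beta / 2 ^+ k * (q * P ^+ k.+1))).
  apply: (le_trans (y := \sum_(j <- s) \sum_(0 <= k < N) G j k)).
    by rewrite big_seq [leRHS]big_seq; apply: ler_sum => j /small_le.
  rewrite exchange_big /=; apply: ler_sum => k _.
  rewrite -mulr_sumr ler_wpM2l ?divr_ge0 ?exprn_ge0 ?(ltW b0) //.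
  have bk0 : 0 < beta / 2 ^+ k.+1 by rewrite divr_gt0 ?exprn_gt0.
  apply: le_trans (ktnorm_level_sum_le t0 bk0 x_kt _ us) _.
  have -> : rho / (beta / 2 ^+ k.+1) = rho / beta * 2 ^+ k.+1 by rewrite invf_div; ring.
  rewrite powRM ?divr_ge0 ?exprn_ge0 ?(ltW b0) // -/q.
  by rewrite -[(2:R) ^+ k.+1]powR_mulrn // powRAC powR_mulrn.
have -> : \sum_(0 <= k < N) beta / 2 ^+ k * (q * P ^+ k.+1)
    = beta * q * P * \sum_(0 <= k < N) (P / 2) ^+ k.
  by rewrite mulr_sumr; apply: eq_bigr => k _; rewrite expr_div_n exprS; ring.
rewrite /dyadic_const -/P [leRHS](_ : _ = beta * q * P * (1 - P / 2)^-1); last by ring.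
by rewrite ler_wpM2l ?mulr_ge0 ?(ltW b0) ?powR_ge0 // geometric_sum_le // (ltW P2_gt0).
Qed.

End DyadicBound.

Section ErrorSplitting.
Context {R : realType} {Lam : countType}.
Implicit Types (a r x : Lam -> R).

Lemma coord_err_le (aj rj xpj xhj beta c : R) : 0 < aj -> 0 < rj -> 0 < c ->
  rj * `|xpj - xhj| + rj * `|xpj| <= rj * `|xhj| +
   (c * (aj^-2 * rj ^+ 2 * (if aj^-2 * rj * beta < `|xpj| then 1 else 0))
    + aj ^+ 2 * (xpj - xhj) ^+ 2 / c
    + 2 * (rj * `|xpj| * (if aj^-2 * rj * beta < `|xpj| then 0 else 1))).
Proof.
move=> aj0 rj0 c0; set e := xpj - xhj.
have sqr_div_ge0 : 0 <= aj ^+ 2 * e ^+ 2 / c.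
  by rewrite divr_ge0 ?(ltW c0) // mulr_ge0 ?sqr_ge0.
case: ifP => _; rewrite ?mulr1 ?mulr0 ?addr0 ?add0r.
  have am_gm : 2 * rj * `|e| <= c * (aj^-2 * rj ^+ 2) + aj ^+ 2 * e ^+ 2 / c.
    rewrite -subr_ge0 -(pmulr_rge0 _ c0).
    have -> : c * (c * (aj^-2 * rj ^+ 2) + aj ^+ 2 * e ^+ 2 / c - 2 * rj * `|e|)
        = (c * aj^-1 * rj - aj * `|e|) ^+ 2.
      by rewrite -[e ^+ 2]real_normK ?num_real //; field; rewrite !gt_eqF.
    exact: sqr_ge0.
  have : `|xpj| <= `|xhj| + `|e| by rewrite -[xpj](subrK xhj) addrC ler_normD.
  rewrite -(ler_pM2l rj0) mulrDr; lra.
have : `|e| <= `|xpj| + `|xhj| by exact: ler_normB.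
rewrite -(ler_pM2l rj0) mulrDr; lra.
Qed.

Lemma wnorm1_err_le {a r} {xp xh : Lam -> R} {t rho beta c M : R} :
  (forall j, 0 < a j) -> (forall j, 0 < r j) -> 0 < t < 1 ->
  (ktnorm a r t xp <= rho%:E)%E ->
  (wnorm a 2 (fun j => (xp j - xh j)%R) <= M%:E)%E -> 0 < beta -> 0 < c ->
  (wnorm r 1 (fun j => (xp j - xh j)%R) + wnorm r 1 xp <=
   wnorm r 1 xh + (c * (rho / beta) `^ t + M ^+ 2 / c
                   + 2 * (dyadic_const t * beta * (rho / beta) `^ t))%:E)%E.
Proof.
move=> a0 r0 t01 xp_kt err_le b0 c0; have /andP[t0 _] := t01.
have r0' j : 0 <= r j := ltW (r0 j).
have [_ err_sums] := wnorm2_le_sums (fun j => ltW (a0 j)) err_le.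
pose G j := c * ((a j)^-2 * r j ^+ 2 * (if (a j)^-2 * r j * beta < `|xp j| then 1 else 0))
    + a j ^+ 2 * (xp j - xh j) ^+ 2 / c
    + 2 * (r j * `|xp j| * (if (a j)^-2 * r j * beta < `|xp j| then 0 else 1)).
have G0 j : 0 <= G j.
  rewrite !addr_ge0 //.
  - by rewrite mulr_ge0 ?level_term_ge0 ?(ltW c0).
  - by rewrite divr_ge0 ?(ltW c0) // mulr_ge0 ?sqr_ge0.
  - by rewrite !mulr_ge0 ?r0' //; case: ifP.
rewrite !wnorm1E // -esumD; [|by move=> j _; rewrite lee_fin mulr_ge0..].
apply: (@le_trans _ _ (\esum_(j in [set: Lam]) ((r j * `|xh j|)%:E + (G j)%:E))%E).
  by apply: le_esum => j _; rewrite -!EFinD lee_fin coord_err_le.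
rewrite esumD; [|by move=> j _; rewrite lee_fin mulr_ge0..|by move=> j _; rewrite lee_fin].
rewrite leeD2l //; apply: esum_le_sums => s us; rewrite lee_fin.
rewrite /G !big_split /= -!mulr_sumr -mulr_suml.
apply: lerD; first apply: lerD.
- by apply: ler_wpM2l; [exact: ltW | exact: ktnorm_level_sum_le].
- by apply: ler_wpM2r; [rewrite invr_ge0 ltW | exact: err_sums].
- by apply: ler_wpM2l; [| exact: ktnorm_small_sum_le].
Qed.

Lemma wnorm1_lty {a r x} {t rho : R} :
  (forall j, 0 < a j) -> (forall j, 0 < r j) -> 0 < t < 1 ->
  (ktnorm a r t x <= rho%:E)%E -> (wnorm a 2 x < +oo)%E -> (wnorm r 1 x < +oo)%E.
Proof.
move=> a0 r0 t01 x_kt x_l2.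
have [w wE] : exists w : R, wnorm a 2 x = w%:E.
  by exists (fine (wnorm a 2 x)); rewrite fineK // ge0_fin_numE ?poweR_ge0.
have sub0 : (fun j => (x j - (fun=> 0 : R) j)%R) = x by apply/funext => j; rewrite subr0.
have := @wnorm1_err_le a r x (fun=> 0) t rho 1 1 w a0 r0 t01 x_kt.
rewrite sub0 wE lexx => /(_ isT ltr01 ltr01).
have -> : wnorm r 1 (fun=> 0) = 0.
  by rewrite wnorm1E => [|j]; [apply: esum1 => j _; rewrite normr0 mulr0 | exact: ltW].
case: (wnorm r 1 x) => [u _| |//]; first exact: ltry.
by rewrite add0e addye // leye_eq.
Qed.

End ErrorSplitting.

Section PowerIdentities.
Context {R : realType}.
Implicit Types (x u v rho delta t : R).

Lemma gt0_powRD x u v : 0 < x -> x `^ (u + v) = x `^ u * x `^ v.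
Proof. by move=> x0; rewrite powRD // (gt_eqF x0) implybT. Qed.

Lemma sqr_powR_half x u : 0 <= x -> (x `^ (u / 2)) ^+ 2 = x `^ u.
Proof. by move=> x0; rewrite -powR_mulrn ?powR_ge0 // -powRrM mulfVK // pnatr_eq0. Qed.

Lemma powR_le1D x u : 0 <= x -> 0 <= u <= 1 -> x `^ u <= 1 + x.
Proof.
move=> x0 /andP[u0 u1]; have [x_le1|x_gt1] := leP x 1.
  apply: (@le_trans _ _ (1 `^ u)); last by rewrite powR1 lerDl.
  by apply: ge0_ler_powR; rewrite ?nnegrE.
by apply: le_trans (ler1_powR _ _) _; rewrite ?lerDr // ltW.
Qed.

Lemma mul_powR_div x rho t : 0 < x -> 0 <= rho ->
  x * (rho / x) `^ t = rho `^ t * x `^ (1 - t).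
Proof.
move=> x0 rho0; rewrite powRM ?invr_ge0 ?(ltW x0) // -powR_inv1 ?(ltW x0) // -powRrM.
by rewrite mulrCA -{1}(powRr1 (ltW x0)) -gt0_powRD // mulN1r addrC.
Qed.

Lemma sqr_rate_half x rho t : 0 < x -> 0 <= rho ->
  (rho `^ (t / 2) * x `^ ((2 - t) / 2)) ^+ 2 = x * (rho `^ t * x `^ (1 - t)).
Proof.
move=> x0 rho0; rewrite exprMn !sqr_powR_half ?(ltW x0) // mulrCA; congr (_ * _).
by rewrite (_ : 2 - t = 1 + (1 - t)) ?gt0_powRD ?powRr1 ?(ltW x0) //; ring.
Qed.

End PowerIdentities.

Section AprioriChoice.
Context {R : realType}.
Implicit Types (rho delta t : R).

Definition apriori_alpha rho delta t := rho `^ (t / (t - 2)) * delta `^ (2 / (2 - t)).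

Definition optimal_rate rho delta t :=
  rho `^ (t / (2 - t)) * delta `^ ((2 - 2 * t) / (2 - t)).

Lemma apriori_alpha_gt0 rho delta t : 0 < rho -> 0 < delta -> 0 < apriori_alpha rho delta t.
Proof. by move=> rho0 delta0; rewrite mulr_gt0 ?powR_gt0. Qed.

Lemma optimal_rate_ge0 rho delta t : 0 <= optimal_rate rho delta t.
Proof. by rewrite mulr_ge0 ?powR_ge0. Qed.

Lemma apriori_alpha_rate {rho delta t} : t != 2 -> 0 < rho -> 0 < delta ->
  rho `^ t * apriori_alpha rho delta t `^ (1 - t) = optimal_rate rho delta t.
Proof.
move=> t_neq2 rho0 delta0; rewrite powRM ?powR_ge0 // -!powRrM mulrA -gt0_powRD //.
have t2 : 2 - t != 0 by rewrite subr_eq0 eq_sym.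
have t2' : t - 2 != 0 by rewrite subr_eq0.
by congr (_ `^ _ * _ `^ _); field; rewrite ?t2 ?t2'.
Qed.

Lemma apriori_alpha_mul_rate {rho delta t} : t != 2 -> 0 < rho -> 0 < delta ->
  apriori_alpha rho delta t * optimal_rate rho delta t = delta ^+ 2.
Proof.
move=> t_neq2 rho0 delta0; rewrite mulrACA -!gt0_powRD //.
have t2 : 2 - t != 0 by rewrite subr_eq0 eq_sym.
have t2' : t - 2 != 0 by rewrite subr_eq0.
have -> : t / (t - 2) + t / (2 - t) = 0 by field; rewrite ?t2 ?t2'.
have -> : 2 / (2 - t) + (2 - 2 * t) / (2 - t) = 2%:R by field.
by rewrite powRr0 mul1r powR_mulrn // ltW.
Qed.

Lemma apriori_terms_le {rho delta t c1 c2 alpha : R} :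
  0 < rho -> 0 < delta -> 0 < t < 1 -> 0 < c1 ->
  c1 * apriori_alpha rho delta t <= alpha -> alpha <= c2 * apriori_alpha rho delta t ->
  delta ^+ 2 / alpha + rho `^ t * alpha `^ (1 - t)
    <= (c1^-1 + 1 + c2) * optimal_rate rho delta t /\
  rho `^ (t / 2) * alpha `^ ((2 - t) / 2) <= (1 + c2) * delta.
Proof.
move=> rho0 delta0 /andP[t0 t1] c10 alpha_ge alpha_le.
have t_neq2 : t != 2 by rewrite lt_eqF // (lt_trans t1) // ltr1n.
set lam := apriori_alpha rho delta t in alpha_ge alpha_le *.
set T := optimal_rate rho delta t.
have lam0 : 0 < lam by apply: apriori_alpha_gt0.
have alpha0 : 0 < alpha := lt_le_trans (mulr_gt0 c10 lam0) alpha_ge.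
have c20 : 0 < c2 by rewrite -(pmulr_lgt0 _ lam0) (lt_le_trans alpha0).
have T0 : 0 <= T := optimal_rate_ge0 rho delta t.
have Q_le : rho `^ t * alpha `^ (1 - t) <= (1 + c2) * T.
  apply: (@le_trans _ _ (rho `^ t * (c2 * lam) `^ (1 - t))).
    by rewrite ler_wpM2l ?powR_ge0 //; apply: ge0_ler_powR;
      rewrite ?nnegrE ?subr_ge0 ?(ltW t1) ?(ltW alpha0) ?(mulr_ge0 (ltW c20) (ltW lam0)).
  rewrite powRM ?(ltW c20) ?(ltW lam0) // mulrCA apriori_alpha_rate //.
  by rewrite ler_wpM2r // powR_le1D ?(ltW c20) // subr_ge0 ltW // lerBlDr lerDl ltW.
split.
  have : delta ^+ 2 / alpha <= c1^-1 * T.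
    rewrite -(apriori_alpha_mul_rate t_neq2 rho0 delta0) -/lam -/T mulrAC ler_wpM2r //.
    by rewrite ler_pdivrMr // mulrC ler_pdivlMr // mulrC.
  lra.
rewrite -(ler_pXn2r (n := 2)) ?nnegrE ?mulr_ge0 ?powR_ge0 ?addr_ge0 ?(ltW c20) ?(ltW delta0) //.
rewrite sqr_rate_half ?(ltW rho0) // exprMn -(apriori_alpha_mul_rate t_neq2 rho0 delta0) -/lam -/T.
apply: (@le_trans _ _ ((c2 * lam) * ((1 + c2) * T))).
  by apply: ler_pM; rewrite ?mulr_ge0 ?powR_ge0 ?(ltW alpha0).
have : c2 <= 1 + c2 by rewrite lerDr.
have : 0 <= T * lam by rewrite mulr_ge0 ?(ltW lam0).
nra.
Qed.

End AprioriChoice.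

Section Balancing.
Context {R : realType}.

Definition residual_const (t L : R) := 8 * L ^+ 2 + 2 * dyadic_const t.

Definition error_const (t L : R) :=
  1 + residual_const t L + 4 * L * (residual_const t L + 1).

Definition apriori_const (c1 c2 t L : R) := error_const t L * (c1^-1 + 2 + c2).

Definition discrepancy_const (tau2 t L : R) :=
  1 + 2 * dyadic_const t + L * (1 + tau2) * (1 + L * (1 + tau2)).

Lemma residual_const_ge0 (t L : R) : 0 < t < 1 -> 0 <= residual_const t L.
Proof.
move=> /dyadic_const_gt0 K0.
by rewrite /residual_const addr_ge0 ?(mulr_ge0 _ (sqr_ge0 _)) ?(mulr_ge0 _ (ltW K0)).
Qed.

Lemma error_const_gt0 (t L : R) : 0 < t < 1 -> 0 <= L -> 0 < error_const t L.
Proof.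
move=> /(residual_const_ge0 _ L) K0 L0.
have := mulr_ge0 (mulr_ge0 (ler0n R 4) L0) (addr_ge0 K0 ler01).
rewrite /error_const; lra.
Qed.

Lemma apriori_const_gt0 (c1 c2 t L : R) : 0 < c1 -> 0 <= c2 -> 0 < t < 1 -> 0 <= L ->
  0 < apriori_const c1 c2 t L.
Proof.
move=> c10 c20 t01 L0; rewrite mulr_gt0 ?error_const_gt0 //.
have : 0 < c1^-1 by rewrite invr_gt0.
lra.
Qed.

Lemma discrepancy_const_gt0 (tau2 t L : R) : 0 <= tau2 -> 0 < t < 1 -> 0 <= L ->
  0 < discrepancy_const tau2 t L.
Proof.
move=> tau20 /dyadic_const_gt0 K0 L0.
have tau2' : 0 <= L * (1 + tau2) by rewrite mulr_ge0 ?addr_ge0.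
have := mulr_ge0 tau2' (addr_ge0 ler01 tau2').
rewrite /discrepancy_const; lra.
Qed.

Lemma balance_bounds {n s delta L K alpha q : R} :
  0 < L -> 0 < alpha -> 0 <= delta -> 0 <= s -> 0 <= K -> 0 <= q -> 0 <= n ->
  (forall c, 0 < c -> n <= (delta ^+ 2 - s ^+ 2) / (2 * alpha) +
        (c * q + (L * (delta + s)) ^+ 2 / c + 2 * (K * alpha * q))) ->
  n <= delta ^+ 2 / alpha + (8 * L ^+ 2 + 2 * K) * (alpha * q) /\
  s ^+ 2 <= 3 * delta ^+ 2 + 4 * (8 * L ^+ 2 + 2 * K) * (alpha * (alpha * q)).
Proof.
move=> L0 alpha0 delta0 s0 K0 q0 n0 n_le.
have aL0 : 0 < alpha * L ^+ 2 by rewrite mulr_gt0 ?exprn_gt0.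
have aq0 : 0 <= alpha * q by rewrite mulr_ge0 ?(ltW alpha0).
split.
  apply: le_trans (n_le (4 * (alpha * L ^+ 2)) (mulr_gt0 (ltr0Sn _ _) aL0)) _.
  have -> : (delta ^+ 2 - s ^+ 2) / (2 * alpha) + (4 * (alpha * L ^+ 2) * q
      + (L * (delta + s)) ^+ 2 / (4 * (alpha * L ^+ 2)) + 2 * (K * alpha * q))
      = delta ^+ 2 / alpha + (4 * L ^+ 2 + 2 * K) * (alpha * q) - (delta - s) ^+ 2 / (4 * alpha).
    by field; rewrite !gt_eqF.
  have : 0 <= (delta - s) ^+ 2 / (4 * alpha) by rewrite divr_ge0 ?sqr_ge0 ?mulr_ge0 ?ltW.
  have : 0 <= L ^+ 2 * (alpha * q) by rewrite mulr_ge0 ?sqr_ge0.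
  nra.
have := le_trans n0 (n_le (8 * (alpha * L ^+ 2)) (mulr_gt0 (ltr0Sn _ _) aL0)).
set B := (X in 0 <= X -> _) => B0.
have : 8 * alpha * B = 4 * delta ^+ 2 - 4 * s ^+ 2 + (delta + s) ^+ 2
    + 8 * (8 * L ^+ 2 + 2 * K) * (alpha * (alpha * q)).
  by rewrite /B; field; rewrite !gt_eqF.
have := mulr_ge0 (mulr_ge0 (ler0n R 8) (ltW alpha0)) B0.
have := sqr_ge0 (delta - s).
nra.
Qed.

Lemma sqr_le_bound {s d P A : R} : 0 <= s -> 0 <= d -> 0 <= P -> 0 <= A ->
  s ^+ 2 <= 3 * d ^+ 2 + A * P ^+ 2 -> s <= 2 * d + (A + 1) * P.
Proof.
move=> s0 d0 P0 A0 s_le.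
rewrite -(ler_pXn2r (n := 2)) ?nnegrE ?addr_ge0 ?mulr_ge0 ?addr_ge0 ?ler01 //.
apply: le_trans s_le _.
have : 0 <= d * P by rewrite mulr_ge0.
have : 0 <= A * (P * P) by rewrite !mulr_ge0.
have : 0 <= A * A * (P * P) by rewrite !mulr_ge0.
rewrite !expr2; nra.
Qed.

End Balancing.

Section TikhonovRates.
Context {R : realType} {Lam : countType} {Y : completeNormedModType R}.
Context {a r : Lam -> R} {D : set (Lam -> R)} {F : (Lam -> R) -> Y} {L t : R}.
Context {xp : Lam -> R} {rho delta : R} {g : Y}.
Hypotheses (HS : setting a r D F L) (t01 : 0 < t < 1) (rho_gt0 : 0 < rho) (Dxp : D xp)
  (xp_kt : (ktnorm a r t xp <= rho%:E)%E) (noise : `|g - F xp| <= delta).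

Local Notation err xh := (fun j => (xp j - xh j)%R).

Let a_gt0 j : 0 < a j. Proof. by case: HS => -[]. Qed.
Let r_gt0 j : 0 < r j. Proof. by case: HS => -[]. Qed.
Let L_gt0 : 0 < L. Proof. by case: HS => _ _ _ _ []. Qed.
Let delta_ge0 : 0 <= delta. Proof. exact: le_trans (normr_ge0 _) noise. Qed.

Lemma wnorm2_err_le {xh : Lam -> R} : D xh ->
  (wnorm a 2 (err xh) <= (L * (delta + `|g - F xh|))%:E)%E.
Proof.
move=> Dxh; case: HS => _ _ _ _ [_ lip].
have := (lip xp xh Dxp Dxh).1; rewrite lee_pdivrMl // -EFinM => /le_trans; apply.
rewrite lee_fin ler_wpM2l ?(ltW L_gt0) //.
by apply: le_trans (ler_distD g (F xp) (F xh)) _; rewrite distrC lerD.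
Qed.

Lemma variational_ineq {alpha : R} {xh : Lam -> R} :
  0 < alpha -> is_minimizer F D r g alpha xh ->
  exists2 n, wnorm r 1 (err xh) = n%:E & forall beta c, 0 < beta -> 0 < c ->
    n <= (delta ^+ 2 - `|g - F xh| ^+ 2) / (2 * alpha) +
      (c * (rho / beta) `^ t + (L * (delta + `|g - F xh|)) ^+ 2 / c
       + 2 * (dyadic_const t * beta * (rho / beta) `^ t)).
Proof.
move=> alpha_gt0 [Dxh xh_min]; set s := `|g - F xh|.
have err_l2 := wnorm2_err_le Dxh.
have xp_l1 : (wnorm r 1 xp < +oo)%E.
  by case: HS => _ _ [D_l2 _] _ _; apply: wnorm1_lty a_gt0 r_gt0 t01 xp_kt (D_l2 _ Dxp).
set p := fine (wnorm r 1 xp).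
have pE : wnorm r 1 xp = p%:E by rewrite fineK // ge0_fin_numE ?poweR_ge0.
have tik := xh_min xp Dxp; rewrite /tikhonov pE -/s in tik.
have xh_l1 : (wnorm r 1 xh < +oo)%E.
  move: tik; case: (wnorm r 1 xh) => [h _| |] //; first exact: ltry.
  by rewrite gt0_muley ?lte_fin // addey // -EFinM -EFinD leye_eq.
set h := fine (wnorm r 1 xh).
have hE : wnorm r 1 xh = h%:E by rewrite fineK // ge0_fin_numE ?poweR_ge0.
have err_ineq beta c (b0 : 0 < beta) (c0 : 0 < c) :=
  wnorm1_err_le a_gt0 r_gt0 t01 xp_kt err_l2 b0 c0.
have err_l1 : (wnorm r 1 (err xh) < +oo)%E.
  move: (err_ineq 1 1 ltr01 ltr01); rewrite pE hE -EFinD.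
  by case: (wnorm r 1 (err xh)) => [u _| |] //; first exact: ltry.
set n := fine (wnorm r 1 (err xh)).
have nE : wnorm r 1 (err xh) = n%:E by rewrite fineK // ge0_fin_numE ?poweR_ge0.
exists n => // beta c b0 c0.
have := err_ineq beta c b0 c0; rewrite nE pE hE -/s -!EFinD lee_fin.
have : h - p <= (delta ^+ 2 - s ^+ 2) / (2 * alpha).
  rewrite invfM mulrA ler_pdivlMr // mulrC.
  have : `|g - F xp| ^+ 2 <= delta ^+ 2 by rewrite ler_pXn2r ?nnegrE.
  move: tik; rewrite hE -!EFinM -!EFinD lee_fin; lra.
lra.
Qed.

Lemma error_splitting {alpha : R} {xh : Lam -> R} :
  0 < alpha -> is_minimizer F D r g alpha xh ->
  (wnorm r 1 (err xh)
     <= (error_const t L * (delta ^+ 2 / alpha + rho `^ t * alpha `^ (1 - t)))%:E)%E /\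
  (wnorm a 2 (err xh)
     <= (error_const t L * (delta + rho `^ (t / 2) * alpha `^ ((2 - t) / 2)))%:E)%E.
Proof.
move=> alpha_gt0 xh_min; have [n nE n_le] := variational_ineq alpha_gt0 xh_min.
set s := `|g - F xh| in n_le *.
have n_ge0 : 0 <= n by rewrite -lee_fin -nE poweR_ge0.
have K_ge0 := ltW (dyadic_const_gt0 t01).
have [n_le' s_sqr_le] := balance_bounds L_gt0 alpha_gt0 delta_ge0 (normr_ge0 _) K_ge0
  (powR_ge0 _ _) n_ge0 (fun c c0 => n_le alpha c alpha_gt0 c0).
rewrite -/(residual_const t L) mul_powR_div ?(ltW rho_gt0) // in n_le' s_sqr_le.
set Q := rho `^ t * alpha `^ (1 - t) in n_le' s_sqr_le *.
set P := rho `^ (t / 2) * alpha `^ ((2 - t) / 2).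
have P_ge0 : 0 <= P by rewrite mulr_ge0 ?powR_ge0.
have K'_ge0 := residual_const_ge0 t L t01.
rewrite -sqr_rate_half ?(ltW rho_gt0) // -/P in s_sqr_le.
have s_le := sqr_le_bound (normr_ge0 _) delta_ge0 P_ge0 (mulr_ge0 (ler0n R 4) K'_ge0) s_sqr_le.
set K' := residual_const t L in n_le' s_le K'_ge0; rewrite /error_const -/K'.
have Q_ge0 : 0 <= Q by rewrite mulr_ge0 ?powR_ge0.
have d_ge0 : 0 <= delta ^+ 2 / alpha by rewrite divr_ge0 ?sqr_ge0 ?(ltW alpha_gt0).
have L_ge0 := ltW L_gt0.
have LK'_ge0 : 0 <= L * K' := mulr_ge0 L_ge0 K'_ge0.
split.
  rewrite nE lee_fin; apply: le_trans n_le' _.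
  have := mulr_ge0 (mulr_ge0 L_ge0 (addr_ge0 K'_ge0 ler01)) (addr_ge0 d_ge0 Q_ge0).
  have := mulr_ge0 K'_ge0 d_ge0.
  lra.
apply: le_trans (wnorm2_err_le xh_min.1) _; rewrite lee_fin.
have := mulr_ge0 L_ge0 delta_ge0; have := mulr_ge0 LK'_ge0 delta_ge0.
have := mulr_ge0 L_ge0 P_ge0; have := mulr_ge0 LK'_ge0 P_ge0.
have := mulr_ge0 K'_ge0 (addr_ge0 delta_ge0 P_ge0).
have := ler_wpM2l L_ge0 s_le; have := delta_ge0.
lra.
Qed.

Lemma apriori_rate {c1 c2 alpha : R} {xh : Lam -> R} : 0 < c1 -> 0 < delta ->
  c1 * apriori_alpha rho delta t <= alpha -> alpha <= c2 * apriori_alpha rho delta t ->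
  is_minimizer F D r g alpha xh ->
  (wnorm r 1 (err xh) <= (apriori_const c1 c2 t L * optimal_rate rho delta t)%:E)%E /\
  (wnorm a 2 (err xh) <= (apriori_const c1 c2 t L * delta)%:E)%E.
Proof.
move=> c1_gt0 delta_gt0 alpha_ge alpha_le xh_min.
have lam_gt0 := apriori_alpha_gt0 rho delta t rho_gt0 delta_gt0.
have alpha_gt0 : 0 < alpha := lt_le_trans (mulr_gt0 c1_gt0 lam_gt0) alpha_ge.
have [T1 T2] := apriori_terms_le rho_gt0 delta_gt0 t01 c1_gt0 alpha_ge alpha_le.
have [e1 e2] := error_splitting alpha_gt0 xh_min.
have Ce_ge0 := ltW (error_const_gt0 t L t01 (ltW L_gt0)).
have c1V_gt0 : 0 < c1^-1 by rewrite invr_gt0.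
have := mulr_ge0 (ltW c1V_gt0) (ltW delta_gt0).
have := optimal_rate_ge0 rho delta t.
rewrite /apriori_const; split.
  apply: le_trans e1 _; rewrite lee_fin -mulrA ler_wpM2l //; nra.
apply: le_trans e2 _; rewrite lee_fin -mulrA ler_wpM2l //; lra.
Qed.

Lemma discrepancy_wnorm2_le {tau2 : R} {xh : Lam -> R} :
  D xh -> `|g - F xh| <= tau2 * delta ->
  (wnorm a 2 (err xh) <= (L * (1 + tau2) * delta)%:E)%E.
Proof.
move=> Dxh res_le; apply: le_trans (wnorm2_err_le Dxh) _.
by rewrite lee_fin -mulrA ler_wpM2l ?(ltW L_gt0) //; lra.
Qed.

Lemma discrepancy_wnorm1_le {tau2 alpha : R} {xh : Lam -> R} :
  0 < delta -> 0 < alpha -> is_minimizer F D r g alpha xh ->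
  delta <= `|g - F xh| -> `|g - F xh| <= tau2 * delta ->
  (wnorm r 1 (err xh) <= ((1 + 2 * dyadic_const t + (L * (1 + tau2)) ^+ 2)
                          * optimal_rate rho delta t)%:E)%E.
Proof.
move=> delta_gt0 alpha_gt0 xh_min; set s := `|g - F xh| => delta_le_s s_le.
have tau2_ge1 : 1 <= tau2 by rewrite -(ler_pM2r delta_gt0) mul1r (le_trans delta_le_s).
have t_neq2 : t != 2 by case/andP: t01 => _ t1; rewrite lt_eqF // (lt_trans t1) // ltr1n.
set lam := apriori_alpha rho delta t; set T := optimal_rate rho delta t.
have lam_gt0 : 0 < lam by apply: apriori_alpha_gt0.
have lamE : lam * (rho / lam) `^ t = T.
  by rewrite mul_powR_div ?(ltW rho_gt0) ?apriori_alpha_rate.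
have fit_le0 : (delta ^+ 2 - s ^+ 2) / (2 * alpha) <= 0.
  by rewrite pmulr_lle0 ?invr_gt0 ?mulr_gt0 // subr_le0 ler_pXn2r ?nnegrE ?delta_ge0 ?normr_ge0.
have res_le : (L * (delta + s)) ^+ 2 / lam <= (L * (1 + tau2)) ^+ 2 * T.
  rewrite ler_pdivrMr // -mulrA (mulrC T) apriori_alpha_mul_rate // -exprMn.
  rewrite ler_pXn2r ?nnegrE ?mulr_ge0 ?addr_ge0 ?(ltW L_gt0) ?delta_ge0 ?normr_ge0 //; last lra.
  by rewrite -mulrA ler_wpM2l ?(ltW L_gt0) //; lra.
have [n nE n_le] := variational_ineq alpha_gt0 xh_min.
have := n_le lam lam lam_gt0 lam_gt0; rewrite -(mulrA (dyadic_const t)) lamE -/s.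
rewrite nE lee_fin -/T; lra.
Qed.

Lemma discrepancy_rate {tau1 tau2 alpha : R} {xh : Lam -> R} :
  1 <= tau1 -> tau1 <= tau2 -> 0 < alpha -> is_minimizer F D r g alpha xh ->
  tau1 * delta <= `|F xh - g| -> `|F xh - g| <= tau2 * delta ->
  (wnorm r 1 (err xh) <= (discrepancy_const tau2 t L * optimal_rate rho delta t)%:E)%E /\
  (wnorm a 2 (err xh) <= (discrepancy_const tau2 t L * delta)%:E)%E.
Proof.
move=> tau1_ge1 tau12 alpha_gt0 xh_min; rewrite distrC => res_ge res_le.
have delta_le_res : delta <= `|g - F xh| by apply: le_trans res_ge; rewrite ler_peMl.
have err2_le := discrepancy_wnorm2_le xh_min.1 res_le.
have LT_ge0 : 0 <= L * (1 + tau2) by rewrite mulr_ge0 ?(ltW L_gt0) //; lra.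
have LT2_ge0 := sqr_ge0 (L * (1 + tau2)).
have K_ge0 := ltW (dyadic_const_gt0 t01); rewrite /discrepancy_const.
split; last first.
  by apply: le_trans err2_le _; rewrite lee_fin ler_wpM2r //; nra.
have [delta0|delta_neq0] := eqVneq delta 0.
  have /andP[t0 t1] := t01.
  rewrite delta0 mulr0 in err2_le; rewrite /optimal_rate delta0 powR0 ?mulr0.
    exact: wnorm1_le0 a_gt0 (fun j => ltW (r_gt0 j)) err2_le.
  by rewrite mulf_neq0 ?invr_eq0 ?gt_eqF ?subr_gt0 //; lra.
have delta_gt0 : 0 < delta by rewrite lt_def delta_neq0 delta_ge0.
apply: le_trans (discrepancy_wnorm1_le delta_gt0 alpha_gt0 xh_min delta_le_res res_le) _.
by rewrite lee_fin ler_wpM2r ?optimal_rate_ge0 //; nra.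
Qed.

End TikhonovRates.

Theorem theorem4p4 (R : realType) :
  (* 1. error splitting *)
  (forall t L : R, 0 < t < 1 -> 0 < L ->
   exists Ce : R, 0 < Ce /\
   forall (Lam : countType) (Y : completeNormedModType R)
     (a r : Lam -> R) (D : set (Lam -> R)) (F : (Lam -> R) -> Y)
     (xp : Lam -> R) (rho delta : R) (g : Y),
     setting a r D F L -> 0 < rho -> D xp -> (ktnorm a r t xp <= rho%:E)%E ->
     0 <= delta -> `|g - F xp| <= delta ->
     forall alpha : R, 0 < alpha -> forall xh, is_minimizer F D r g alpha xh ->
       (wnorm r 1 (fun j => (xp j - xh j)%R)
          <= (Ce * (delta ^+ 2 / alpha + rho `^ t * alpha `^ (1 - t)))%:E)%E /\
       (wnorm a 2 (fun j => (xp j - xh j)%R)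
          <= (Ce * (delta + rho `^ (t / 2) * alpha `^ ((2 - t) / 2)))%:E)%E) /\
  (* 2. a-priori parameter choice *)
  (forall c1 c2 t L : R, 0 < c1 -> c1 < c2 -> 0 < t < 1 -> 0 < L ->
   exists Cp : R, 0 < Cp /\
   forall (Lam : countType) (Y : completeNormedModType R)
     (a r : Lam -> R) (D : set (Lam -> R)) (F : (Lam -> R) -> Y)
     (xp : Lam -> R) (rho delta : R) (g : Y),
     setting a r D F L -> 0 < rho -> D xp -> (ktnorm a r t xp <= rho%:E)%E ->
     0 < delta -> `|g - F xp| <= delta ->
     forall alpha : R,
       c1 * rho `^ (t / (t - 2)) * delta `^ (2 / (2 - t)) <= alpha ->
       alpha <= c2 * rho `^ (t / (t - 2)) * delta `^ (2 / (2 - t)) ->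
     forall xh, is_minimizer F D r g alpha xh ->
       (wnorm r 1 (fun j => (xp j - xh j)%R)
          <= (Cp * (rho `^ (t / (2 - t)) * delta `^ ((2 - 2 * t) / (2 - t))))%:E)%E /\
       (wnorm a 2 (fun j => (xp j - xh j)%R) <= (Cp * delta)%:E)%E) /\
  (* 3. discrepancy principle *)
  (forall tau2 t L : R, 1 <= tau2 -> 0 < t < 1 -> 0 < L ->
   exists Cd : R, 0 < Cd /\
   forall (Lam : countType) (Y : completeNormedModType R)
     (a r : Lam -> R) (D : set (Lam -> R)) (F : (Lam -> R) -> Y)
     (xp : Lam -> R) (rho delta : R) (g : Y),
     setting a r D F L -> 0 < rho -> D xp -> (ktnorm a r t xp <= rho%:E)%E ->
     0 <= delta -> `|g - F xp| <= delta ->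
     forall tau1 : R, 1 <= tau1 -> tau1 <= tau2 ->
     forall alpha : R, 0 < alpha -> forall xh, is_minimizer F D r g alpha xh ->
       tau1 * delta <= `|F xh - g| -> `|F xh - g| <= tau2 * delta ->
       (wnorm r 1 (fun j => (xp j - xh j)%R)
          <= (Cd * (rho `^ (t / (2 - t)) * delta `^ ((2 - 2 * t) / (2 - t))))%:E)%E /\
       (wnorm a 2 (fun j => (xp j - xh j)%R) <= (Cd * delta)%:E)%E).
Proof.
split; [|split].
- move=> t L t01 L_gt0; exists (error_const t L).
  split=> [|Lam Y a r D F xp rho delta g HS rho_gt0 Dxp xp_kt _ noise alpha alpha_gt0 xh xh_min].
    exact: error_const_gt0 (ltW L_gt0).
  exact: (error_splitting HS t01 rho_gt0 Dxp xp_kt noise alpha_gt0 xh_min).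
- move=> c1 c2 t L c1_gt0 c12 t01 L_gt0; exists (apriori_const c1 c2 t L).
  split=> [|Lam Y a r D F xp rho delta g HS rho_gt0 Dxp xp_kt delta_gt0 noise alpha].
    by rewrite apriori_const_gt0 // ltW // (lt_trans c1_gt0).
  move=> alpha_ge alpha_le xh xh_min; rewrite -!mulrA in alpha_ge alpha_le.
  exact: (apriori_rate HS t01 rho_gt0 Dxp xp_kt noise c1_gt0 delta_gt0 alpha_ge alpha_le xh_min).
- move=> tau2 t L tau2_ge1 t01 L_gt0; exists (discrepancy_const tau2 t L).
  split=> [|Lam Y a r D F xp rho delta g HS rho_gt0 Dxp xp_kt _ noise tau1 tau1_ge1 tau12].
    by rewrite discrepancy_const_gt0 ?ltW // (lt_le_trans ltr01).
  move=> alpha alpha_gt0 xh xh_min.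
  exact: (discrepancy_rate HS t01 rho_gt0 Dxp xp_kt noise tau1_ge1 tau12 alpha_gt0 xh_min).
Qed.
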